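(* Let $\mathfrak M$ (modelled on $X$) be a Banach manifold with chart family $\mathscr A$ and $\mathfrak M_0$ (modelled on $X_0$) a $C^1$-embedded Banach submanifold of $\mathfrak M$ with respect to $\mathscr A$, such that $(\mathfrak M,\mathfrak M_0,\mathscr A)$ is outward spreadable. Let $\eta\in\mathfrak M_0$, $(\mathcal U,\varphi)$ an $\mathfrak M_0$-regular chart at $\eta$, and $f:(-\varepsilon,\varepsilon)\to\mathfrak M$ with $f(0)=\eta$ such that $\varphi\circ f:(-\varepsilon,\varepsilon)\to X$ is differentiable at $t=0$. Then for every $\mathfrak M_0$-regular chart $(\mathcal V,\psi)$ at $\eta$ such that $\psi\circ f:(-\varepsilon,\varepsilon)\to X$ is differentiable at $t=0$, $$(\psi\circ f)'(0)=(\psi\circ\varphi^{-1})'(\varphi(\eta))\,(\varphi\circ f)'(0).$$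
   Context: Densely embedded spaces and the class $\mathfrak C^k$. For Banach spaces $X$ and $X_0$, $X_0$ is a densely embedded Banach subspace of $X$ if $X_0$ is a dense linear subspace of $X$ and there is $C>0$ with $\|x\|_X\le C\|x\|_{X_0}$ for $x\in X_0$. For such $X_0\subseteq X$, a Banach space $Y$, an open set $U_0\subseteq X_0$ and an integer $k\ge1$, $\mathfrak C^k(U_0;X,Y)$ denotes the set of maps $F:U_0\to Y$ such that (i) for each $x_0\in U_0$ there are bounded symmetric $j$-linear maps $F^{(j)}(x_0):X^j\to Y$, $1\le j\le k$, with $\|F(x)-F(x_0)-\sum_{j=1}^k\frac1{j!}F^{(j)}(x_0)(x-x_0,\dots,x-x_0)\|_Y/\|x-x_0\|_{X_0}^k\to0$ as $\|x-x_0\|_{X_0}\to0$, and (ii) $x\mapsto F^{(j)}(x)$ is continuous from $U_0$ (with the $X_0$-topology) into the space $L^j(X,Y)$ of bounded $j$-linear maps. We write $F'=F^{(1)}$. Embedded submanifolds. Let $\mathfrak M,\mathfrak M_0$ be topological Banach manifolds modelled on $X$, $X_0$, let $\mathscr A$ be a family of local charts of $\mathfrak M$, and $k\ge1$. $\mathfrak M_0$ is a $C^k$-embedded Banach submanifold of $\mathfrak M$ with respect to $\mathscr A$ if: (D1) $X_0$ is a densely embedded Banach subspace of $X$; (D2) $\mathfrak M_0\subseteq\mathfrak M$ and $\mathcal U\cap\mathfrak M_0$ is open in $\mathfrak M_0$ for every open $\mathcal U\subseteq\mathfrak M$; (D3) the domains of the charts of $\mathscr A$ cover $\mathfrak M$;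 (D4) for $\eta\in\mathfrak M_0$ and $(\mathcal U,\varphi)\in\mathscr A$ with $\eta\in\mathcal U$, $(\mathcal U_0,\varphi|_{\mathcal U_0})$ with $\mathcal U_0:=\mathcal U\cap\mathfrak M_0$ is a local chart of $\mathfrak M_0$; (D5) for $\eta\in\mathfrak M_0$ and $(\mathcal U,\varphi),(\mathcal V,\psi)\in\mathscr A$ with $\eta\in\mathcal U\cap\mathcal V$, $\psi\circ\varphi^{-1}\in\mathfrak C^k(\varphi(\mathcal U_0\cap\mathcal V_0);X,X)$ and $\varphi\circ\psi^{-1}\in\mathfrak C^k(\psi(\mathcal U_0\cap\mathcal V_0);X,X)$. A chart of $\mathscr A$ whose domain contains $\eta$ is an $\mathfrak M_0$-regular local chart at $\eta$. $(\mathfrak M,\mathfrak M_0,\mathscr A)$ is outward spreadable if there is a Banach manifold $\widetilde{\mathfrak M}\supseteq\mathfrak M$ with a chart family $\widetilde{\mathscr A}$ whose restrictions to $\mathfrak M$ form $\mathscr A$, such that $\mathfrak M$ is a $C^1$-embedded Banach submanifold of $\widetilde{\mathfrak M}$ with respect to $\widetilde{\mathscr A}$. For charts at $\eta\in\mathfrak M_0$, $(\varphi\circ\psi^{-1})'(\psi(\eta))\in L(X)$ is the first derivative in the $\mathfrak C^1$ sense. *)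

From HB Require Import structures.
From mathcomp Require Import all_boot all_order all_algebra.
From mathcomp Require Import all_classical all_reals all_analysis.
Set Implicit Arguments. Unset Strict Implicit. Unset Printing Implicit Defensive.
Import Order.TTheory GRing.Theory Num.Theory.
Import numFieldNormedType.Exports.
Local Open Scope classical_set_scope.
Local Open Scope ring_scope.

(* A (candidate) local chart of a topological space M modelled on X:
   a domain together with a map (the values of the map outside the
   domain are irrelevant). *)
Record chart (R : realType) (M : topologicalType) (X : normedModType R) :=
  Chart { cdom : set M ; cmap : M -> X }.
Arguments chart : clear implicits.
Arguments Chart {R M X}.
Arguments cdom {R M X}.
Arguments cmap {R M X}.

(* (U, phi) is a local chart: U open, phi injective and continuous on U,
   phi maps open subsets of U onto open subsets of X (so phi is a
   homeomorphism of U onto the open set phi(U)). *)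
Definition is_chart (R : realType) (M : topologicalType) (X : normedModType R)
    (c : chart R M X) : Prop :=
  [/\ open (cdom c),
      (forall x y, cdom c x -> cdom c y -> cmap c x = cmap c y -> x = y),
      {within cdom c, continuous (cmap c)} &
      forall W : set M, open W -> W `<=` cdom c -> open (cmap c @` W)].

Definition is_manifold (R : realType) (M : topologicalType) (X : normedModType R) : Prop :=
  forall m : M, exists c : chart R M X, is_chart c /\ cdom c m.

Definition bounded_linear (R : realType) (X Y : normedModType R) (D : X -> Y) : Prop :=
  linear D /\ exists C : R, forall v : X, `|D v| <= C * `|v|.

Definition dense_embedding (R : realType) (X0 X : normedModType R) (iota : X0 -> X) : Prop :=
  [/\ linear iota, injective iota, dense (range iota) &
      exists C : R, 0 < C /\ forall x : X0, `|iota x| <= C * `|x|].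

Definition restricts_to (R : realType) (M0 M : topologicalType) (X0 X : normedModType R)
    (iota : X0 -> X) (j : M0 -> M) (c : chart R M X) (phi0 : M0 -> X0) : Prop :=
  forall m : M0, cdom c (j m) -> iota (phi0 m) = cmap c (j m).

Definition restr_chart (R : realType) (M0 M : topologicalType) (X0 X : normedModType R)
    (j : M0 -> M) (c : chart R M X) (phi0 : M0 -> X0) : chart R M0 X0 :=
  Chart (j @^-1` cdom c) phi0.

(* D is a first derivative, in the sense of the class C^1(U0; X, Y), of the
   transition map psi o phi^{-1} at the point phi0(m0), where the transition
   is defined on phi0(W) (W = U0 cap V0):
   || psi(phi^{-1} x) - psi(phi^{-1} x0) - D(x - x0) ||_Y / ||x - x0||_{X0} -> 0
   as ||x - x0||_{X0} -> 0, written with x = phi0 m, x0 = phi0 m0. *)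
Definition trans_deriv_at (R : realType) (M0 M : topologicalType) (X0 X Y : normedModType R)
    (iota : X0 -> X) (j : M0 -> M) (W : set M0) (phi0 : M0 -> X0) (psi : M -> Y)
    (m0 : M0) (D : X -> Y) : Prop :=
  bounded_linear D /\
  forall e : R, 0 < e -> exists d : R, 0 < d /\
    forall m : M0, W m -> `|phi0 m - phi0 m0| < d ->
      `|psi (j m) - psi (j m0) - D (iota (phi0 m - phi0 m0))| <= e * `|phi0 m - phi0 m0|.

(* psi o phi^{-1} belongs to C^1(phi0(W); X, Y): derivatives exist at every
   point and depend continuously (X0-topology -> operator norm of L(X,Y)). *)
Definition trans_C1 (R : realType) (M0 M : topologicalType) (X0 X Y : normedModType R)
    (iota : X0 -> X) (j : M0 -> M) (W : set M0) (phi0 : M0 -> X0) (psi : M -> Y) : Prop :=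
  exists D : M0 -> X -> Y,
    (forall m, W m -> trans_deriv_at iota j W phi0 psi m (D m)) /\
    (forall m0, W m0 -> forall e : R, 0 < e -> exists d : R, 0 < d /\
       forall m, W m -> `|phi0 m - phi0 m0| < d ->
         forall v : X, `|D m v - D m0 v| <= e * `|v|).

Definition C1_embedded (R : realType) (M0 M : topologicalType) (X0 X : normedModType R)
    (iota : X0 -> X) (j : M0 -> M) (A : set (chart R M X)) : Prop :=
  [/\ dense_embedding iota,
      injective j /\ continuous j,
      (forall c, A c -> is_chart c) /\ (forall m : M, exists2 c, A c & cdom c m),
      (forall c, A c -> forall eta : M0, cdom c (j eta) ->
         exists phi0 : M0 -> X0, restricts_to iota j c phi0 /\
                                 is_chart (restr_chart j c phi0)) &
      (forall c d, A c -> A d -> forall eta : M0,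
         cdom c (j eta) -> cdom d (j eta) ->
         forall phi0 psi0 : M0 -> X0,
           restricts_to iota j c phi0 -> restricts_to iota j d psi0 ->
           let W := j @^-1` (cdom c `&` cdom d) in
           trans_C1 iota j W phi0 (cmap d) /\ trans_C1 iota j W psi0 (cmap c))].

Definition outward_spreadable (R : realType) (M : topologicalType) (X : normedModType R)
    (A : set (chart R M X)) : Prop :=
  exists (Xt : completeNormedModType R) (iotat : X -> Xt)
         (Mt : topologicalType) (k : M -> Mt) (At : set (chart R Mt Xt)),
    [/\ is_manifold Mt Xt,
        (forall ct, At ct -> exists2 c, A c &
            cdom c = k @^-1` cdom ct /\ restricts_to iotat k ct (cmap c)),
        (forall c, A c -> exists2 ct, At ct &
            cdom c = k @^-1` cdom ct /\ restricts_to iotat k ct (cmap c)) &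
        C1_embedded iotat k At].

From HB Require Import structures.
From mathcomp Require Import all_boot all_order all_algebra.
From mathcomp Require Import all_classical all_reals all_analysis.
From mathcomp Require Import lra.
Import Order.TTheory GRing.Theory Num.Theory.
Import numFieldNormedType.Exports.
Local Open Scope classical_set_scope.
Local Open Scope ring_scope.

(* Spread M out to the manifold modelled on Xt given by outward spreadability.
   There the transition map psi o phi^-1 has a derivative Dt with respect to
   the X-norm at phi(eta), so the ordinary chain rule applies to the curve f:
   (psi o f)'(0) = Dt (phi o f)'(0).  It remains to see that Dt = D on X.
   Both are first-order approximations of the increments of psi o phi^-1
   along the rays phi0(eta) + s x0, x0 in X0, which stay in the chart domain
   because phi0 is open; hence Dt and D agree on X0, and then on X by density
   of X0 and boundedness. *)

Section LinearProp.
Context {R : pzRingType} {U V : lmodType R} {f : U -> V} (linf : linear f).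

Lemma linD u v : f (u + v) = f u + f v.
Proof. by have := linf 1 u v; rewrite !scale1r. Qed.

Lemma lin0 : f 0 = 0.
Proof. by apply/(addrI (f 0)); rewrite -linD !addr0. Qed.

Lemma linZ a u : f (a *: u) = a *: f u.
Proof. by have := linf a u 0; rewrite !addr0 lin0 addr0. Qed.

Lemma linB u v : f (u - v) = f u - f v.
Proof. by rewrite linD -scaleN1r linZ scaleN1r. Qed.

End LinearProp.

Section Derivatives.
Context {R : realType}.

Lemma bounded_linear_bound {U V : normedModType R} {D : U -> V} :
  bounded_linear D -> exists2 K, 0 <= K & forall v, `|D v| <= K * `|v|.
Proof.
move=> [_ [C hC]]; exists `|C| => // v.
by apply: le_trans (hC v) _; apply: ler_wpM2r => //; exact: ler_norm.
Qed.

Lemma bounded_linear_comp {U V W : normedModType R} {f : U -> V} {g : V -> W} :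
  bounded_linear f -> bounded_linear g -> bounded_linear (g \o f).
Proof.
move=> bf bg; have [[linf _] [ling _]] := (bf, bg).
have [Kf Kf0 hf] := bounded_linear_bound bf.
have [Kg Kg0 hg] := bounded_linear_bound bg.
split; first by move=> a u v /=; rewrite linf ling.
exists (Kg * Kf) => v /=; rewrite -mulrA.
by apply: le_trans (hg _) _; rewrite ler_wpM2l.
Qed.

Lemma small_norm_eq0 {V : normedModType R} {x : V} (K : R) :
  (forall e, 0 < e -> `|x| <= e * K) -> x = 0.
Proof.
move=> small; apply/normr0_eq0/eqP; rewrite eq_le normr_ge0 andbT.
apply/ler_addgt0Pr => e e0; rewrite add0r.
have [K0|K0] := leP K 0.
  by apply: le_trans (small 1 ltr01) _; rewrite mul1r; lra.
by apply: le_trans (small (e / K) (divr_gt0 e0 K0)) _; rewrite divfK ?gt_eqF.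
Qed.

Lemma exists_small_scale {a b delta : R} : 0 <= a -> 0 <= b -> 0 < delta ->
  exists2 s, 0 < s & s * a < delta /\ s * b < delta.
Proof.
move=> a0 b0 delta0; have N0 : 0 < a + b + 1 by rewrite ltr_wpDl ?addr_ge0.
have deltaN : delta / (a + b + 1) * (a + b + 1) = delta by rewrite divfK ?gt_eqF.
exists (delta / (a + b + 1)); first exact: divr_gt0.
by split; rewrite -[X in _ < X]deltaN ltr_pM2l ?divr_gt0 //; lra.
Qed.

(* [a] and [b] are both within [e * K] of the quotient [w / s]. *)
Lemma common_approx_eq {V : normedModType R} {a b : V} (K : R) :
  (forall e, 0 < e -> exists s w, [/\ s != 0, `|w - s *: a| <= e * `|s| * K
                                     & `|w - s *: b| <= e * `|s| * K]) ->
  a = b.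
Proof.
move=> approx; apply/eqP; rewrite -subr_eq0; apply/eqP.
apply: (small_norm_eq0 (K + K)) => e e0.
have [s [w [s0 wa wb]]] := approx e e0.
have s_gt0 : 0 < `|s| by rewrite normr_gt0.
rewrite -(ler_pM2l s_gt0) -normrZ scalerBr.
have -> : s *: a - s *: b = (w - s *: b) - (w - s *: a).
  by rewrite opprB [RHS]addrC addrA subrK.
by apply: le_trans (ler_normB _ _) _; nra.
Qed.

Lemma dense_bounded_linear_eq {X Y : normedModType R} {S : set X} {F G : X -> Y} :
  dense S -> bounded_linear F -> bounded_linear G ->
  (forall x, S x -> F x = G x) -> F =1 G.
Proof.
move=> denseS bF bG eqS v; apply/eqP; rewrite -subr_eq0; apply/eqP.
have [KF KF0 hF] := bounded_linear_bound bF.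
have [KG KG0 hG] := bounded_linear_bound bG.
apply: (small_norm_eq0 (KF + KG)) => e e0.
have [y [vy Sy]] : ball v e `&` S !=set0.
  by apply: denseS; [exists v; exact: ballxx | exact: ball_open].
have vye : `|v - y| <= e by move: vy; rewrite -ball_normE /= => /ltW.
have -> : F v - G v = F (v - y) - G (v - y).
  by rewrite (linB bF.1) (linB bG.1) (eqS y Sy) opprB addrA subrK.
apply: le_trans (ler_normB _ _) _.
by have := hF (v - y); have := hG (v - y); nra.
Qed.

Lemma derivable_expansion {V : normedModType R} {u : R -> V} :
  derivable u 0 1 -> forall e, 0 < e ->
  \forall t \near 0, `|u t - u 0 - t *: 'D_1 u 0| <= e * `|t|.
Proof.
move=> /derivable_nbhs /eqaddoP du e e0; apply: filterS (du e e0) => t /=.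
by rewrite !fctE addr0 [t%:A]mulr1 opprD addrA.
Qed.

(* With [iota] and [j] the identities, [trans_deriv_at] is the plain
   derivative of [psi o phi^-1] with respect to the norm of X. *)
Lemma trans_deriv_chain {M : topologicalType} {X Y Z : normedModType R}
    {W : set M} {phi : M -> X} {psi : M -> Y} {P : Y -> Z} {T : X -> Z}
    {m0 : M} {f : R -> M} :
  bounded_linear P -> trans_deriv_at id id W phi (P \o psi) m0 T ->
  f 0 = m0 -> (\forall t \near 0, W (f t)) ->
  derivable (phi \o f) 0 1 -> derivable (psi \o f) 0 1 ->
  P ('D_1 (psi \o f) 0) = T ('D_1 (phi \o f) 0).
Proof.
move=> bP [bT expT] f0 nearW dphi dpsi; subst m0.
set L := 'D_1 (phi \o f) 0; set L' := 'D_1 (psi \o f) 0.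
have [KP KP0 hP] := bounded_linear_bound bP.
have [KT KT0 hT] := bounded_linear_bound bT.
apply: (common_approx_eq (KP + (`|L| + 1) + KT)) => e e0.
have [d [d0 expTd]] := expT e e0.
near (0 : R)^' => t.
have t0 : t != 0 by near: t; exact: nbhs_dnbhs_neq.
have Wt : W (f t) by near: t; exact: cvg_within.
have phi_t1 : `|phi (f t) - phi (f 0) - t *: L| <= 1 * `|t|.
  by near: t; apply: cvg_within; exact: derivable_expansion.
have phi_t : `|phi (f t) - phi (f 0) - t *: L| <= e * `|t|.
  by near: t; apply: cvg_within; exact: derivable_expansion.
have psi_t : `|psi (f t) - psi (f 0) - t *: L'| <= e * `|t|.
  by near: t; apply: cvg_within; exact: derivable_expansion.
have t_small : `|t| < d / (`|L| + 1).
  by near: t; apply: dnbhs0_lt; rewrite divr_gt0 // ltr_wpDl.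
have dphi_le : `|phi (f t) - phi (f 0)| <= `|t| * (`|L| + 1).
  rewrite -[phi _ - _](subrK (t *: L)); apply: le_trans (ler_normD _ _) _.
  by rewrite normrZ; lra.
have dphi_lt : `|phi (f t) - phi (f 0)| < d.
  by apply: le_lt_trans dphi_le _; rewrite -ltr_pdivlMr // ltr_wpDl.
exists t, (P (psi (f t)) - P (psi (f 0))); split => //.
  rewrite -(linZ bP.1) -(linB bP.1) -(linB bP.1).
  apply: le_trans (hP _) _; apply: le_trans (ler_wpM2l KP0 psi_t) _.
  rewrite mulrC ler_wpM2l ?mulr_ge0 ?(ltW e0) //.
  by have := normr_ge0 L; lra.
have := expTd (f t) Wt dphi_lt; rewrite /= => expT_t.
have -> : P (psi (f t)) - P (psi (f 0)) - t *: T L =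
    (P (psi (f t)) - P (psi (f 0)) - T (phi (f t) - phi (f 0))) +
    T (phi (f t) - phi (f 0) - t *: L).
  by rewrite (linB bT.1 (phi (f t) - phi (f 0))) (linZ bT.1) addrA subrK.
apply: le_trans (ler_normD _ _) _.
have := ler_wpM2l (ltW e0) dphi_le; have := ler_wpM2l KT0 phi_t.
have := hT (phi (f t) - phi (f 0) - t *: L).
have : 0 <= KP * (e * `|t|) by rewrite !mulr_ge0 ?(ltW e0).
lra.
Unshelve. all: by end_near.
Qed.

Lemma trans_deriv_embedded_eq {M0 M : topologicalType} {X0 X Y Z : normedModType R}
    {iota : X0 -> X} {j : M0 -> M} {W0 : set M0} {phi0 : M0 -> X0}
    {W : set M} {phi : M -> X} {psi : M -> Y} {P : Y -> Z}
    {m0 : M0} {D : X -> Y} {T : X -> Z} :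
  linear iota -> dense (range iota) -> bounded_linear P ->
  (forall m, W0 m -> W (j m) /\ phi (j m) = iota (phi0 m)) -> W0 m0 ->
  nbhs (phi0 m0) (phi0 @` W0) ->
  trans_deriv_at iota j W0 phi0 psi m0 D ->
  trans_deriv_at id id W phi (P \o psi) (j m0) T ->
  T =1 P \o D.
Proof.
move=> lin_iota dense_iota bP W0W W0m0 /nbhs_ballP[r r0 ballW0] [bD expD] [bT expT].
have [KP KP0 hP] := bounded_linear_bound bP.
suff on_range x0 : T (iota x0) = P (D (iota x0)).
  apply: (dense_bounded_linear_eq dense_iota bT (bounded_linear_comp bD bP)).
  by move=> _ [x0 _ <-]; exact: on_range.
apply: (common_approx_eq (`|iota x0| + KP * `|x0|)) => e e0.
have [d1 [d10 expD1]] := expD e e0; have [d2 [d20 expT2]] := expT e e0.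
pose delta := Num.min r (Num.min d1 d2).
have delta0 : 0 < delta by rewrite !lt_min r0 d10 d20.
have [s s0 [sx siota]] := exists_small_scale (normr_ge0 x0) (normr_ge0 (iota x0)) delta0.
move: sx siota; rewrite !lt_min => /andP[sxr /andP[sxd1 _]] /andP[_ /andP[_ siotad2]].
have [m W0m phi0m] : (phi0 @` W0) (phi0 m0 + s *: x0).
  apply: ballW0; rewrite -ball_normE /= opprD addrA subrr add0r normrN.
  by rewrite normrZ gtr0_norm.
have [Wm phim] := W0W m W0m; have [_ phim0] := W0W m0 W0m0.
have dphi0 : phi0 m - phi0 m0 = s *: x0 by rewrite phi0m addrAC subrr add0r.
have dphi : phi (j m) - phi (j m0) = s *: iota x0.
  by rewrite phim phim0 -(linB lin_iota) dphi0 (linZ lin_iota).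
exists s, (P (psi (j m)) - P (psi (j m0))); split; first by rewrite gt_eqF.
  have := expT2 (j m) Wm; rewrite /= dphi normrZ gtr0_norm // => /(_ siotad2).
  rewrite (linZ bT.1) mulrA => /le_trans; apply.
  by rewrite ler_wpM2l ?mulr_ge0 ?(ltW e0) ?(ltW s0) // ler_wpDr ?mulr_ge0.
have := expD1 m W0m; rewrite dphi0 normrZ gtr0_norm // => /(_ sxd1).
rewrite (linZ lin_iota) (linZ bD.1) => expD_m.
rewrite -(linZ bP.1) -!(linB bP.1).
apply: le_trans (hP _) _; apply: le_trans (ler_wpM2l KP0 expD_m) _.
have : 0 <= e * s * `|iota x0| by rewrite !mulr_ge0 ?(ltW e0) ?(ltW s0).
lra.
Qed.

End Derivatives.

Section EmbeddedCharts.
Context {R : realType} {X0 X : normedModType R} {M0 M : topologicalType}.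

Lemma restricted_chart_nbhs {iota : X0 -> X} {j : M0 -> M}
    {A : set (chart R M X)} {c d : chart R M X} {phi0 : M0 -> X0} {eta : M0} :
  C1_embedded iota j A -> A c -> A d -> cdom c (j eta) -> cdom d (j eta) ->
  restricts_to iota j c phi0 ->
  nbhs (phi0 eta) (phi0 @` (j @^-1` (cdom c `&` cdom d))).
Proof.
move=> [[_ inj_iota _ _] [_ cont_j] [charts _] D4 _] Ac Ad ceta deta resc.
have [phi0' [resc' [_ _ _ open_image]]] := D4 c Ac eta ceta.
have eq_phi0 m : cdom c (j m) -> phi0 m = phi0' m.
  by move=> cm; apply: inj_iota; rewrite resc // resc'.
have [oc _ _ _] := charts c Ac; have [od _ _ _] := charts d Ad.
have oW0 : open (j @^-1` (cdom c `&` cdom d)).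
  by apply: open_comp => [x _|]; [exact: cont_j | exact: openI].
have -> : phi0 @` (j @^-1` (cdom c `&` cdom d)) =
    phi0' @` (j @^-1` (cdom c `&` cdom d)).
  by apply: eq_imagel => m [cm _]; exact: eq_phi0.
rewrite eq_phi0 //.
apply: open_nbhs_nbhs; split; last by exists eta.
by apply: open_image => // m [].
Qed.

Lemma spread_trans_deriv {A : set (chart R M X)} {c d : chart R M X} {m0 : M} :
  outward_spreadable A -> A c -> A d -> cdom c m0 -> cdom d m0 ->
  exists (Xt : normedModType R) (iotat : X -> Xt) (Dt : Xt -> Xt),
    [/\ injective iotat, bounded_linear iotat &
        trans_deriv_at id id (cdom c `&` cdom d) (cmap c) (iotat \o cmap d) m0
          (Dt \o iotat)].
Proof.
move=> [Xt [iotat [Mt [k [At [_ _ spreadA [embt _ _ _ D5]]]]]]] Ac Ad cm0 dm0.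
have [lin_iotat inj_iotat _ [C [_ hC]]] := embt.
have b_iotat : bounded_linear iotat by split=> //; exists C.
have [ct Atct [domc resct]] := spreadA c Ac.
have [dt Atdt [domd resdt]] := spreadA d Ad.
have cdE : cdom c `&` cdom d = k @^-1` (cdom ct `&` cdom dt) by rewrite domc domd.
have cdm0 : (k @^-1` (cdom ct `&` cdom dt)) m0 by rewrite -cdE.
have [[Dt [derivDt _]] _] :=
  D5 ct dt Atct Atdt m0 cdm0.1 cdm0.2 (cmap c) (cmap d) resct resdt.
have [bDt expDt] := derivDt m0 cdm0.
exists Xt; exists iotat; exists (Dt m0); split => //.
split; first exact: bounded_linear_comp b_iotat bDt.
move=> e e0; have [delta [delta0 expDt_e]] := expDt e e0.
exists delta; split => // m cdm near_m.
have [_ dtm0] := cdm0; rewrite cdE in cdm; have [_ dtm] := cdm.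
by rewrite /= !resdt //; exact: expDt_e.
Qed.

End EmbeddedCharts.

Theorem lemma2p8 (R : realType) (X0 X : completeNormedModType R) (iota : X0 -> X)
    (M0 M : topologicalType) (j : M0 -> M) (A : set (chart R M X)) :
  is_manifold M X -> is_manifold M0 X0 ->
  C1_embedded iota j A -> outward_spreadable A ->
  forall (eta : M0) (c : chart R M X), A c -> cdom c (j eta) ->
  forall (eps : R) (f : R -> M), 0 < eps -> f 0 = j eta ->
  (\forall t \near (0 : R), cdom c (f t)) ->
  derivable (cmap c \o f) 0 1 ->
  forall d : chart R M X, A d -> cdom d (j eta) ->
  (\forall t \near (0 : R), cdom d (f t)) ->
  derivable (cmap d \o f) 0 1 ->
  forall (phi0 : M0 -> X0) (D : X -> X),
    restricts_to iota j c phi0 ->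
    trans_deriv_at iota j (j @^-1` (cdom c `&` cdom d)) phi0 (cmap d) eta D ->
    'D_1 (cmap d \o f) 0 = D ('D_1 (cmap c \o f) 0).
Proof.
move=> _ _ emb spread eta c Ac ceta _ f _ f0 near_c dc d Ad deta near_d dd
  phi0 D resc derivD.
have [Xt [iotat [Dt [inj_iotat b_iotat derivDt]]]] :=
  spread_trans_deriv spread Ac Ad ceta deta.
have [[lin_iota _ dense_iota _] _ _ _ _] := emb.
have DtE x : Dt (iotat x) = iotat (D x).
  apply: (trans_deriv_embedded_eq lin_iota dense_iota b_iotat _ _
    (restricted_chart_nbhs emb Ac Ad ceta deta resc) derivD derivDt).
    by move=> m cdm; split=> //; rewrite resc //; case: cdm.
  by split.
apply: inj_iotat; rewrite -DtE.
exact: (trans_deriv_chain b_iotat derivDt f0 (filterI near_c near_d) dc dd).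
Qed.
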